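(* Let $D$ be a distribution over $\mathcal{X}\times\mathcal{Y}$ ($\mathcal{X}\subset\mathbb{R}^d$, $\mathcal{Y}=\{1,\dots,c\}$) that is $(k_1,\dots,k_n)$-separable with $\delta$-margin, and let $f:\mathcal{Y}\to\mathbb{R}^m$ be injective, regarding $f(y)$ as the desired output for an input $x$ with label $y$. Let $K=\prod_{s=1}^n k_s$. Then for every $\epsilon>0$ there exists a 4-layer network $g:\mathcal{X}\to\mathbb{R}^m$ of the form $$p^s(x)=\sum_{l=1}^{k_s} v_{s,l}\,\rho(u_s^Tx-\beta_{s,l})\ (s=1,\dots,n),\qquad p(x)=(p^1(x),\dots,p^n(x))^T,$$ $$g(x)=W^T\big(\rho(u^Tp(x)-\gamma_1),\dots,\rho(u^Tp(x)-\gamma_K)\big)^T,$$ with $u_s\in\mathbb{R}^d$, $\beta_{s,l},v_{s,l}\in\mathbb{R}$, $u\in\mathbb{R}^n$, $\gamma_1,\dots,\gamma_K\in\mathbb{R}$, $W\in\mathbb{R}^{K\times m}$ — thus with $n(d+1)+2\sum_{s=1}^n k_s+(m+1)\prod_{s=1}^n k_s$ parameters — such that $$\mathbb{P}_{(x,y)\sim D}\Big(\max_{1\le j\le m}|g_j(x)-f_j(y)|>\epsilon\Big)=0,$$ where $g_j,f_j$ denote $j$-th components.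
   Context: $\rho(t)=1/(1+e^{-t})$ is the sigmoid function. Definition ($(k_1,\dots,k_n)$-separable with $\delta$-margin): Let $\mathcal{X}\subset\mathbb{R}^d$, $\mathcal{Y}=\{1,\dots,c\}$. A distribution $D$ over $\mathcal{X}\times\mathcal{Y}$ is $(k_1,\dots,k_n)$-separable with $\delta$-margin ($\delta>0$) if there exist $a_1,\dots,a_n\in\mathbb{R}^d$ with $\|a_s\|_2=1$ and constants $b_{s,1}<b_{s,2}<\cdots<b_{s,k_s+1}$ for each $s\in\{1,\dots,n\}$ such that, for each multi-index $\mathbf{i}=(i_1,\dots,i_n)$ with $i_s\in\{1,\dots,k_s\}$ and $\mathcal{X}_{\mathbf{i}}=\{x\in\mathcal{X}: b_{s,i_s}+\delta<a_s^Tx<b_{s,i_s+1}-\delta \text{ for all } 1\le s\le n\}$: (i) there is $y_{\mathbf{i}}\in\mathcal{Y}$ with $\mathbb{P}_{(x,y)\sim D}(y=y_{\mathbf{i}}\mid x\in\mathcal{X}_{\mathbf{i}})=1$; (ii) $\mathbb{P}_{(x,y)\sim D}\big(x\in\bigcup_{\mathbf{i}}\mathcal{X}_{\mathbf{i}}\big)=1$. *)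

From Stdlib Require Import Reals Lra Lia.
Open Scope R_scope.

(* Vectors in R^d are functions nat -> R, only coordinates 0..d-1 matter. *)
Definition vec := nat -> R.

Fixpoint fsum (n : nat) (f : nat -> R) : R :=
  match n with O => 0 | S k => fsum k f + f k end.

Fixpoint nprod (n : nat) (k : nat -> nat) : nat :=
  match n with O => 1%nat | S j => (nprod j k * k j)%nat end.

Definition dot (d : nat) (a b : vec) : R := fsum d (fun i => a i * b i).
Definition norm2 (d : nat) (a : vec) : R := sqrt (dot d a a).

Definition rho (t : R) : R := 1 / (1 + exp (- t)).

Definition event := vec -> nat -> Prop.

(* A (finitely additive) probability on events of X x Y. *)
Definition is_prob (P : event -> R) : Prop :=
  (forall A, 0 <= P A) /\
  P (fun _ _ => True) = 1 /\
  (forall A B : event, (forall x y, A x y -> B x y -> False) ->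
      P (fun x y => A x y \/ B x y) = P A + P B) /\
  (forall A B : event, (forall x y, A x y <-> B x y) -> P A = P B).

(* P(A | B) = 1, conditional probability P(A and B)/P(B) (defined when P(B) > 0) *)
Definition cond_prob_one (P : event -> R) (A B : event) : Prop :=
  P B > 0 -> P (fun x y => A x y /\ B x y) / P B = 1.

(* a multi-index i = (i_0,...,i_{n-1}), 0 <= i_s < k_s  (0-based) *)
Definition multi_index (n : nat) (k : nat -> nat) (i : nat -> nat) : Prop :=
  forall s, (s < n)%nat -> (i s < k s)%nat.

(* the cell X_i; hyperplane constants b s 0 < b s 1 < ... < b s (k s) (0-based) *)
Definition cell (d n : nat) (X : vec -> Prop) (a : nat -> vec) (b : nat -> nat -> R)
    (delta : R) (i : nat -> nat) (x : vec) : Prop :=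
  X x /\ forall s, (s < n)%nat ->
    b s (i s) + delta < dot d (a s) x < b s (S (i s)) - delta.

Definition separable (d c n : nat) (X : vec -> Prop) (P : event -> R)
    (k : nat -> nat) (delta : R) : Prop :=
  delta > 0 /\ (forall s, (s < n)%nat -> (1 <= k s)%nat) /\
  exists (a : nat -> vec) (b : nat -> nat -> R),
    (forall s, (s < n)%nat -> norm2 d (a s) = 1) /\
    (forall s j, (s < n)%nat -> (j < k s)%nat -> b s j < b s (S j)) /\
    (forall i, multi_index n k i ->
       exists yi, (1 <= yi <= c)%nat /\
         cond_prob_one P (fun _ y => y = yi) (fun x _ => cell d n X a b delta i x)) /\
    P (fun x _ => exists i, multi_index n k i /\ cell d n X a b delta i x) = 1.

Definition layer_p (d : nat) (k : nat -> nat) (us : nat -> vec)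
    (beta v : nat -> nat -> R) (s : nat) (x : vec) : R :=
  fsum (k s) (fun l => v s l * rho (dot d (us s) x - beta s l)).

Definition net (d n : nat) (k : nat -> nat) (us : nat -> vec) (beta v : nat -> nat -> R)
    (u : vec) (gamma : nat -> R) (W : nat -> nat -> R) (x : vec) (j : nat) : R :=
  let K := nprod n k in
  fsum K (fun t => W t j *
     rho (fsum n (fun s => u s * layer_p d k us beta v s x) - gamma t)).

(* Rescaled by a large factor C1, the unit  rho (C1 (a_s.x - b_{s,l}))
   is uniformly close to the indicator of  b_{s,l} < a_s.x  on every cell (the margin
   delta keeps a_s.x away from the breakpoints), so with weights v = 1 the first
   hidden layer p^s counts the breakpoints below a_s.x: on the cell X_i it is close to
   i_s + 1.  The second layer reads the multi-index i in mixed radix: with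
   u_s = C2 * k_0 ... k_{s-1}, the quantity  u.p  is within C2/4 of
   C2 * (code i + const), and the K staircase units  rho (u.p - gamma_t) then act as
   the indicators of  t <= code i.  Taking as output weights the increments of
   t |-> f(label of the cell with code t), the output telescopes to f(y) on every
   cell, up to eps.  Since a.s. x lies in a cell and y is that cell's label, the
   failure event is null. *)

From Stdlib Require Import Reals Lra Lia Psatz Classical ClassicalEpsilon.
Open Scope R_scope.

Lemma fsum_ext n f g : (forall l, (l < n)%nat -> f l = g l) -> fsum n f = fsum n g.
Proof.
  induction n as [|n IH]; intros Hfg; simpl; [reflexivity|].
  rewrite IH, Hfg by first [lia | intros; apply Hfg; lia]; reflexivity.
Qed.

Lemma fsum_scal n c f : fsum n (fun l => c * f l) = c * fsum n f.
Proof. induction n as [|n IH]; simpl; [ring|rewrite IH; ring]. Qed.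

Lemma fsum_minus n f g : fsum n (fun l => f l - g l) = fsum n f - fsum n g.
Proof. induction n as [|n IH]; simpl; [ring|rewrite IH; ring]. Qed.

Lemma fsum_const n c : fsum n (fun _ => c) = INR n * c.
Proof. induction n as [|n IH]; simpl fsum; [simpl; ring|rewrite IH, S_INR; ring]. Qed.

Lemma fsum_nonneg n f : (forall l, (l < n)%nat -> 0 <= f l) -> 0 <= fsum n f.
Proof.
  induction n as [|n IH]; intros Hf; simpl; [lra|].
  assert (0 <= fsum n f) by (apply IH; intros; apply Hf; lia).
  assert (0 <= f n) by (apply Hf; lia).
  lra.
Qed.

Lemma fsum_abs_le n f h :
  (forall l, (l < n)%nat -> Rabs (f l) <= h l) -> Rabs (fsum n f) <= fsum n h.
Proof.
  induction n as [|n IH]; intros Hfh; simpl.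
  - rewrite Rabs_R0; lra.
  - eapply Rle_trans; [apply Rabs_triang|].
    apply Rplus_le_compat; [apply IH; intros; apply Hfh; lia | apply Hfh; lia].
Qed.

Lemma fsum_prefix N0 N f :
  (N0 <= N)%nat -> (forall l, (N0 <= l < N)%nat -> f l = 0) -> fsum N f = fsum N0 f.
Proof.
  induction N as [|N IH]; intros Hle Hzero; [replace N0 with 0%nat by lia; reflexivity|].
  destruct (Nat.eq_dec N0 (S N)) as [->|Hne]; [reflexivity|].
  simpl; rewrite Hzero, IH by (lia || (intros; apply Hzero; lia)); ring.
Qed.

Lemma fsum_indicator K T g : (T < K)%nat ->
  fsum K (fun t => g t * (if (t <=? T)%nat then 1 else 0)) = fsum (S T) g.
Proof.
  intros HT.
  rewrite (fsum_prefix (S T)) by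
    (lia || (intros l Hl; destruct (Nat.leb_spec l T); [lia|ring])).
  apply fsum_ext; intros l Hl; destruct (Nat.leb_spec l T); [ring|lia].
Qed.

Definition increments (F : nat -> R) (t : nat) : R :=
  match t with O => F O | S t' => F (S t') - F t' end.

Lemma fsum_increments F T : fsum (S T) (increments F) = F T.
Proof.
  induction T as [|T IH]; [simpl; ring|].
  change (fsum (S T) (increments F) + increments F (S T) = F (S T)).
  rewrite IH; simpl; ring.
Qed.

Lemma finite_upper_bound (g : nat -> R) m :
  exists B, 0 <= B /\ forall j, (j < m)%nat -> g j <= B.
Proof.
  induction m as [|m [B [HB Hg]]]; [exists 0; split; [lra|intros; lia]|].
  exists (Rmax B (g m)); split; [eapply Rle_trans; [exact HB|apply Rmax_l]|].
  intros j Hj; destruct (Nat.eq_dec j m) as [->|Hne]; [apply Rmax_r|].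
  eapply Rle_trans; [apply Hg; lia|apply Rmax_l].
Qed.

Lemma small_multiplier A e : 0 <= A -> 0 < e -> exists eta, 0 < eta /\ A * eta < e.
Proof.
  intros HA He; exists (e / (A + 1)); split; [apply Rdiv_lt_0_compat; lra|].
  apply Rmult_lt_reg_r with (A + 1); [lra|].
  replace (A * (e / (A + 1)) * (A + 1)) with (A * e) by (field; lra); nra.
Qed.

Lemma scale_for_margin delta eta :
  0 < delta -> 0 < eta -> exists C, 0 < C /\ C * delta >= 1 / eta.
Proof.
  intros Hd He; exists (1 / (eta * delta)); split.
  - apply Rdiv_lt_0_compat; nra.
  - right; field; lra.
Qed.

Lemma Rabs_le_bounds x a : Rabs x <= a -> - a <= x <= a.
Proof.
  intros Hx; pose proof (Rle_abs x); pose proof (Rle_abs (- x)).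
  rewrite Rabs_Ropp in *; lra.
Qed.

Lemma rho_opp t : rho (- t) = 1 - rho t.
Proof.
  unfold rho; rewrite Ropp_involutive, exp_Ropp.
  pose proof (exp_pos t); field; split; lra.
Qed.

Lemma rho_saturates_low eta t : 0 < eta -> t <= - (1 / eta) -> Rabs (rho t) <= eta.
Proof.
  intros He Ht.
  assert (Hinv : eta * (1 / eta) = 1) by (field; lra).
  assert (0 < 1 / eta) by (apply Rdiv_lt_0_compat; lra).
  pose proof (exp_ineq1 (- t) ltac:(lra)) as Hexp.
  assert (Hrho : rho t * (1 + exp (- t)) = 1)
    by (unfold rho; pose proof (exp_pos (- t)); field; lra).
  assert (0 < rho t) by (unfold rho; pose proof (exp_pos (- t));
                         apply Rdiv_lt_0_compat; lra).
  rewrite Rabs_pos_eq by lra; nra.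
Qed.

Lemma rho_saturates_high eta t : 0 < eta -> t >= 1 / eta -> Rabs (rho t - 1) <= eta.
Proof.
  intros He Ht.
  replace (rho t - 1) with (- rho (- t)) by (rewrite rho_opp; ring).
  rewrite Rabs_Ropp; apply rho_saturates_low; lra.
Qed.

Lemma increasing_le (b : nat -> R) K : (forall l, (l < K)%nat -> b l < b (S l)) ->
  forall l l', (l <= l')%nat -> (l' <= K)%nat -> b l <= b l'.
Proof.
  intros Hb l l' Hll'; induction Hll' as [|l' Hll' IH]; intros HK; [lra|].
  pose proof (Hb l' ltac:(lia)); pose proof (IH ltac:(lia)); lra.
Qed.

Lemma sigmoid_count (b : nat -> R) K j z C delta eta :
  (forall l, (l < K)%nat -> b l < b (S l)) -> (j < K)%nat ->
  b j + delta < z < b (S j) - delta ->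
  0 < eta -> 0 < C -> C * delta >= 1 / eta ->
  Rabs (fsum K (fun l => rho (C * z - C * b l)) - INR (S j)) <= INR K * eta.
Proof.
  intros Hb Hj Hz He HC HCd.
  replace (INR (S j)) with (fsum K (fun l => 1 * (if (l <=? j)%nat then 1 else 0)))
    by (rewrite fsum_indicator, fsum_const by exact Hj; ring).
  rewrite <- fsum_const, <- fsum_minus; apply fsum_abs_le; intros l Hl.
  destruct (Nat.leb_spec l j) as [Hle|Hgt].
  - assert (b l <= b j) by (apply (increasing_le b K); auto; lia).
    rewrite Rmult_1_l; apply rho_saturates_high; nra.
  - assert (b (S j) <= b l) by (apply (increasing_le b K); auto; lia).
    rewrite Rmult_0_r, Rminus_0_r; apply rho_saturates_low; nra.
Qed.

Lemma sigmoid_staircase (w : nat -> R) K T z C eta :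
  (T < K)%nat -> 0 < eta -> C / 4 >= 1 / eta -> Rabs (z - C * INR T) <= C / 4 ->
  Rabs (fsum K (fun t => w t * rho (z - C * (INR t - 1 / 2))) - fsum (S T) w)
    <= eta * fsum K (fun t => Rabs (w t)).
Proof.
  intros HT He HC Hz.
  assert (0 < 1 / eta) by (apply Rdiv_lt_0_compat; lra).
  apply Rabs_le_bounds in Hz.
  rewrite <- (fsum_indicator K T w HT), <- fsum_minus, <- fsum_scal.
  apply fsum_abs_le; intros t Ht.
  rewrite <- Rmult_minus_distr_l, Rabs_mult, (Rmult_comm eta).
  apply Rmult_le_compat_l; [apply Rabs_pos|].
  destruct (Nat.leb_spec t T) as [Hle|Hgt].
  - apply le_INR in Hle; apply rho_saturates_high; nra.
  - apply le_INR in Hgt; rewrite S_INR in Hgt.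
    rewrite Rminus_0_r; apply rho_saturates_low; nra.
Qed.

Fixpoint mixed_radix (n : nat) (k i : nat -> nat) : nat :=
  match n with O => O | S s => (mixed_radix s k i + i s * nprod s k)%nat end.

Lemma mixed_radix_lt n k i : multi_index n k i -> (mixed_radix n k i < nprod n k)%nat.
Proof.
  unfold multi_index; induction n as [|n IH]; intros Hi; simpl; [lia|].
  assert (mixed_radix n k i < nprod n k)%nat by (apply IH; intros; apply Hi; lia).
  assert (i n < k n)%nat by (apply Hi; lia).
  nia.
Qed.

Lemma mixed_radix_inj n k i i' : multi_index n k i -> multi_index n k i' ->
  mixed_radix n k i = mixed_radix n k i' -> forall s, (s < n)%nat -> i s = i' s.
Proof.
  unfold multi_index; induction n as [|n IH]; intros Hi Hi' Hcode s Hs; [lia|].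
  simpl in Hcode.
  assert (mixed_radix n k i < nprod n k)%nat
    by (apply mixed_radix_lt; intros t Ht; apply Hi; lia).
  assert (mixed_radix n k i' < nprod n k)%nat
    by (apply mixed_radix_lt; intros t Ht; apply Hi'; lia).
  assert (Hlast : i n = i' n).
  { destruct (Nat.lt_total (i n) (i' n)) as [Hlt|[Heq|Hlt]]; [|exact Heq|].
    - assert ((i n + 1) * nprod n k <= i' n * nprod n k)%nat
        by (apply Nat.mul_le_mono_r; lia); nia.
    - assert ((i' n + 1) * nprod n k <= i n * nprod n k)%nat
        by (apply Nat.mul_le_mono_r; lia); nia. }
  destruct (Nat.eq_dec s n) as [->|Hne]; [exact Hlast|].
  rewrite Hlast in Hcode.
  apply IH; [intros; apply Hi; lia | intros; apply Hi'; lia | lia | lia].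
Qed.

(* The code as the real number that the second layer of the network computes. *)
Lemma mixed_radix_real n k i :
  fsum n (fun s => INR (nprod s k) * INR (S (i s))) =
  INR (mixed_radix n k i) + fsum n (fun s => INR (nprod s k)).
Proof.
  induction n as [|n IH]; cbn [fsum mixed_radix]; [simpl; ring|].
  rewrite IH, plus_INR, mult_INR, S_INR; ring.
Qed.

Lemma cell_ext d n X a b delta i i' x : (forall s, (s < n)%nat -> i s = i' s) ->
  cell d n X a b delta i x -> cell d n X a b delta i' x.
Proof.
  unfold cell; intros Hii' [HX Hx]; split; [exact HX|].
  intros s Hs; rewrite <- (Hii' s Hs); auto.
Qed.

Section Probability.
Variable P : event -> R.
Hypothesis HP : is_prob P.

Lemma P_ext A B : (forall x y, A x y <-> B x y) -> P A = P B.
Proof. destruct HP as [_ [_ [_ H]]]; apply H. Qed.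

Lemma P_add A B : (forall x y, A x y -> B x y -> False) ->
  P (fun x y => A x y \/ B x y) = P A + P B.
Proof. destruct HP as [_ [_ [H _]]]; apply H. Qed.

Lemma P_ge0 A : 0 <= P A.
Proof. destruct HP as [H _]; apply H. Qed.

Lemma P_empty : P (fun _ _ => False) = 0.
Proof.
  pose proof (P_add (fun _ _ => False) (fun _ _ => False) ltac:(firstorder)) as Hadd.
  rewrite (P_ext _ (fun _ _ => False)) in Hadd by tauto; lra.
Qed.

Lemma P_mono A B : (forall x y, A x y -> B x y) -> P A <= P B.
Proof.
  intros HAB; rewrite (P_ext B (fun x y => A x y \/ (B x y /\ ~ A x y))).
  - rewrite P_add by tauto; pose proof (P_ge0 (fun x y => B x y /\ ~ A x y)); lra.
  - intros x y; destruct (classic (A x y)); firstorder.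
Qed.

Lemma P_null_sub A B : (forall x y, A x y -> B x y) -> P B = 0 -> P A = 0.
Proof. intros HAB HB; pose proof (P_mono A B HAB); pose proof (P_ge0 A); lra. Qed.

Lemma P_union A B : P (fun x y => A x y \/ B x y) <= P A + P B.
Proof.
  rewrite (P_ext _ (fun x y => A x y \/ (B x y /\ ~ A x y))).
  - rewrite P_add by tauto.
    pose proof (P_mono (fun x y => B x y /\ ~ A x y) B ltac:(firstorder)); lra.
  - intros x y; destruct (classic (A x y)); tauto.
Qed.

Lemma P_union_null A B : P A = 0 -> P B = 0 -> P (fun x y => A x y \/ B x y) = 0.
Proof.
  intros HA HB; pose proof (P_union A B).
  pose proof (P_ge0 (fun x y => A x y \/ B x y)); lra.
Qed.

Lemma P_finite_union_null N (A : nat -> event) : (forall t, (t < N)%nat -> P (A t) = 0) ->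
  P (fun x y => exists t, (t < N)%nat /\ A t x y) = 0.
Proof.
  induction N as [|N IH]; intros Hnull.
  - rewrite <- P_empty; apply P_ext; intros x y; split; [intros [t [Ht _]]; lia|tauto].
  - apply (P_null_sub _ (fun x y => (exists t, (t < N)%nat /\ A t x y) \/ A N x y)).
    + intros x y [t [Ht HA]]; destruct (Nat.eq_dec t N) as [->|Hne]; [right; exact HA|].
      left; exists t; split; [lia|exact HA].
    + apply P_union_null; [apply IH; intros; apply Hnull; lia | apply Hnull; lia].
Qed.

Lemma P_compl_null A : P A = 1 -> P (fun x y => ~ A x y) = 0.
Proof.
  intros HA; destruct HP as [_ [Htotal _]].
  rewrite (P_ext _ (fun x y => A x y \/ ~ A x y)), P_add in Htotal by
    (tauto || (intros x y; split; [intros _; apply classic|tauto])).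
  lra.
Qed.

Lemma cond_prob_one_ext A B B' : (forall x y, B x y <-> B' x y) ->
  cond_prob_one P A B -> cond_prob_one P A B'.
Proof.
  unfold cond_prob_one; intros HBB' HAB Hpos.
  rewrite <- (P_ext B B' HBB') in Hpos |- *.
  rewrite (P_ext (fun x y => A x y /\ B' x y) (fun x y => A x y /\ B x y)) by firstorder.
  exact (HAB Hpos).
Qed.

Lemma cond_prob_one_null (C : event) (Y : nat) :
  cond_prob_one P (fun _ y => y = Y) C -> P (fun x y => C x y /\ y <> Y) = 0.
Proof.
  unfold cond_prob_one; intros HC.
  destruct (Rle_lt_dec (P C) 0) as [Hle|Hpos].
  - pose proof (P_mono (fun x y => C x y /\ y <> Y) C ltac:(firstorder)).
    pose proof (P_ge0 (fun x y => C x y /\ y <> Y)); lra.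
  - specialize (HC Hpos).
    assert (Hgood : P (fun x y => y = Y /\ C x y) = P C).
    { apply (Rmult_eq_reg_r (/ P C)); [|apply Rinv_neq_0_compat; lra].
      rewrite Rinv_r by lra; exact HC. }
    rewrite (P_ext C (fun x y => (y = Y /\ C x y) \/ (C x y /\ y <> Y))) in Hgood.
    + rewrite P_add in Hgood by tauto; lra.
    + intros x y; destruct (Nat.eq_dec y Y); tauto.
Qed.

Section Cells.
Variables (d c n : nat) (X : vec -> Prop) (k : nat -> nat) (a : nat -> vec)
  (b : nat -> nat -> R) (delta : R).

(* Cells with the same code coincide, so labels can be attached to codes. *)
Lemma code_labels :
  (forall i, multi_index n k i -> exists yi, (1 <= yi <= c)%nat /\
     cond_prob_one P (fun _ y => y = yi) (fun x _ => cell d n X a b delta i x)) ->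
  exists Y : nat -> nat, forall i, multi_index n k i ->
    cond_prob_one P (fun _ y => y = Y (mixed_radix n k i))
      (fun x _ => cell d n X a b delta i x).
Proof.
  intros Hcells.
  destruct (choice (fun t yt => forall i, multi_index n k i -> mixed_radix n k i = t ->
    cond_prob_one P (fun _ y => y = yt) (fun x _ => cell d n X a b delta i x)))
    as [Y HY]; [|exists Y; intros i Hi; exact (HY _ i Hi eq_refl)].
  intros t; destruct (classic (exists i0, multi_index n k i0 /\ mixed_radix n k i0 = t))
    as [[i0 [Hi0 Hcode0]]|Hnone].
  - destruct (Hcells i0 Hi0) as [y0 [_ Hy0]]; exists y0; intros i Hi Hcode.
    assert (Hsame : forall s, (s < n)%nat -> i0 s = i s)
      by exact (mixed_radix_inj n k i0 i Hi0 Hi (eq_trans Hcode0 (eq_sym Hcode))).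
    apply (cond_prob_one_ext _ _ _ (fun x y => conj
      (cell_ext d n X a b delta i0 i x Hsame)
      (cell_ext d n X a b delta i i0 x (fun s Hs => eq_sym (Hsame s Hs))))).
    exact Hy0.
  - exists 0%nat; intros i Hi Hcode; exfalso; eauto.
Qed.

Lemma almost_surely_labelled (Y : nat -> nat) :
  (forall i, multi_index n k i ->
     cond_prob_one P (fun _ y => y = Y (mixed_radix n k i))
       (fun x _ => cell d n X a b delta i x)) ->
  P (fun x _ => exists i, multi_index n k i /\ cell d n X a b delta i x) = 1 ->
  P (fun x y => ~ exists i, multi_index n k i /\ cell d n X a b delta i x /\
                            y = Y (mixed_radix n k i)) = 0.
Proof.
  intros HY Hcover.
  set (mislabelled := fun t x y => exists i, multi_index n k i /\
    mixed_radix n k i = t /\ cell d n X a b delta i x /\ y <> Y t).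
  assert (Hmis : forall t, P (mislabelled t) = 0).
  { intros t; destruct (classic (exists i0, multi_index n k i0 /\ mixed_radix n k i0 = t))
      as [[i0 [Hi0 <-]]|Hnone].
    - apply (P_null_sub _ (fun x y => cell d n X a b delta i0 x /\
                                     y <> Y (mixed_radix n k i0))).
      + intros x y [i [Hi [Hcode [Hx Hy]]]]; split; [|exact Hy].
        apply (cell_ext d n X a b delta i); [|exact Hx].
        apply (mixed_radix_inj n k); auto.
      + exact (cond_prob_one_null _ _ (HY i0 Hi0)).
    - apply (P_null_sub _ (fun _ _ => False)); [|exact P_empty].
      intros x y [i [Hi [Hcode _]]]; eauto. }
  set (covered := fun (x : vec) (_ : nat) =>
    exists i, multi_index n k i /\ cell d n X a b delta i x) in Hcover.
  apply (P_null_sub _ (fun x y =>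
    ~ covered x y \/ exists t, (t < nprod n k)%nat /\ mislabelled t x y)).
  - intros x y Hbad.
    destruct (classic (covered x y)) as [[i [Hi Hx]]|Hout]; [right|left; exact Hout].
    exists (mixed_radix n k i); split; [apply mixed_radix_lt; exact Hi|].
    exists i; split; [exact Hi|split; [reflexivity|split; [exact Hx|]]].
    intros Hy; apply Hbad; exists i; auto.
  - apply P_union_null; [exact (P_compl_null _ Hcover)|].
    exact (P_finite_union_null _ _ (fun t _ => Hmis t)).
Qed.

End Cells.
End Probability.

Lemma dot_scal d C a x : dot d (fun i => C * a i) x = C * dot d a x.
Proof. unfold dot; rewrite <- fsum_scal; apply fsum_ext; intros; ring. Qed.

Lemma layer_on_cell d n (X : vec -> Prop) k a b delta C eta i x s :
  (forall s j, (s < n)%nat -> (j < k s)%nat -> b s j < b s (S j)) ->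
  0 < eta -> 0 < C -> C * delta >= 1 / eta ->
  multi_index n k i -> cell d n X a b delta i x -> (s < n)%nat ->
  Rabs (layer_p d k (fun s i => C * a s i) (fun s l => C * b s l) (fun _ _ => 1) s x
        - INR (S (i s))) <= INR (k s) * eta.
Proof.
  intros Hb He HC HCd Hi [_ Hx] Hs; unfold layer_p.
  rewrite (fsum_ext _ _ (fun l => rho (C * dot d (a s) x - C * b s l)))
    by (intros; rewrite dot_scal; ring).
  apply (sigmoid_count (b s) (k s) (i s) _ C delta eta); auto.
Qed.

Lemma weighted_counts (p : nat -> R) n k i eta C' :
  (forall s, (s < n)%nat -> Rabs (p s - INR (S (i s))) <= INR (k s) * eta) ->
  0 < C' -> fsum n (fun s => INR (nprod s k) * INR (k s)) * eta <= 1 / 4 ->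
  Rabs (fsum n (fun s => C' * INR (nprod s k) * p s)
        - C' * fsum n (fun s => INR (nprod s k)) - C' * INR (mixed_radix n k i))
    <= C' / 4.
Proof.
  intros Hp HC' Hsmall.
  assert (Hdev : Rabs (fsum n (fun s => INR (nprod s k) * (p s - INR (S (i s)))))
                   <= fsum n (fun s => INR (nprod s k) * INR (k s)) * eta).
  { rewrite Rmult_comm, <- fsum_scal; apply fsum_abs_le; intros s Hs.
    rewrite Rabs_mult, (Rabs_pos_eq (INR _)) by apply pos_INR.
    pose proof (pos_INR (nprod s k)); pose proof (Hp s Hs); nra. }
  replace (fsum n (fun s => C' * INR (nprod s k) * p s)
           - C' * fsum n (fun s => INR (nprod s k)) - C' * INR (mixed_radix n k i))
    with (C' * fsum n (fun s => INR (nprod s k) * (p s - INR (S (i s))))).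
  - rewrite Rabs_mult, (Rabs_pos_eq C') by lra; nra.
  - rewrite (fsum_ext n (fun s => INR (nprod s k) * (p s - INR (S (i s))))
                       (fun s => INR (nprod s k) * p s - INR (nprod s k) * INR (S (i s))))
      by (intros; ring).
    rewrite fsum_minus, mixed_radix_real.
    rewrite (fsum_ext n (fun s => C' * INR (nprod s k) * p s)
                       (fun s => C' * (INR (nprod s k) * p s))) by (intros; ring).
    rewrite fsum_scal; ring.
Qed.

Lemma net_on_cell d n (X : vec -> Prop) k a b delta C1 eta1 C2 eta2
    (F : nat -> vec) B eps i x j :
  (forall s j, (s < n)%nat -> (j < k s)%nat -> b s j < b s (S j)) ->
  0 < eta1 -> 0 < C1 -> C1 * delta >= 1 / eta1 ->
  fsum n (fun s => INR (nprod s k) * INR (k s)) * eta1 <= 1 / 4 ->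
  0 < eta2 -> C2 / 4 >= 1 / eta2 -> B * eta2 < eps ->
  fsum (nprod n k) (fun t => Rabs (increments (fun t => F t j) t)) <= B ->
  multi_index n k i -> cell d n X a b delta i x ->
  Rabs (net d n k (fun s i => C1 * a s i) (fun s l => C1 * b s l) (fun _ _ => 1)
          (fun s => C2 * INR (nprod s k))
          (fun t => C2 * (fsum n (fun s => INR (nprod s k)) + INR t - 1 / 2))
          (fun t j => increments (fun t => F t j) t) x j
        - F (mixed_radix n k i) j) < eps.
Proof.
  intros Hb He1 HC1 HC1d Hsmall He2 HC2 HB Hvar Hi Hx.
  assert (0 < 1 / eta2) by (apply Rdiv_lt_0_compat; lra).
  set (z := fsum n (fun s => C2 * INR (nprod s k) *
              layer_p d k (fun s i => C1 * a s i) (fun s l => C1 * b s l)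
                (fun _ _ => 1) s x) - C2 * fsum n (fun s => INR (nprod s k))).
  assert (Hz : Rabs (z - C2 * INR (mixed_radix n k i)) <= C2 / 4)
    by (apply (weighted_counts _ n k i eta1); [intros s Hs; apply (layer_on_cell d n X k a b delta)|..];
        auto; lra).
  unfold net; cbv zeta.
  rewrite (fsum_ext _ _ (fun t => increments (fun t => F t j) t *
                                  rho (z - C2 * (INR t - 1 / 2))))
    by (intros t _; cbv beta; f_equal; f_equal; unfold z; ring).
  rewrite <- (fsum_increments (fun t => F t j) (mixed_radix n k i)).
  eapply Rle_lt_trans.
  - apply (sigmoid_staircase _ _ _ _ C2 eta2); [apply mixed_radix_lt| | |]; auto.
  - pose proof (fsum_nonneg (nprod n k) (fun t => Rabs (increments (fun t => F t j) t))
                  (fun t _ => Rabs_pos _)); nra.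
Qed.

Theorem theorem2
  (d c m n : nat) (X : vec -> Prop) (P : event -> R)
  (k : nat -> nat) (delta : R) (f : nat -> vec) :
  is_prob P ->
  P (fun x y => ~ (X x /\ (1 <= y <= c)%nat)) = 0 ->
  separable d c n X P k delta ->
  (forall y1 y2, (1 <= y1 <= c)%nat -> (1 <= y2 <= c)%nat ->
     (forall j, (j < m)%nat -> f y1 j = f y2 j) -> y1 = y2) ->
  forall eps, eps > 0 ->
  exists (us : nat -> vec) (beta v : nat -> nat -> R) (u : vec)
         (gamma : nat -> R) (W : nat -> nat -> R),
    P (fun x y => exists j, (j < m)%nat /\
         Rabs (net d n k us beta v u gamma W x j - f y j) > eps) = 0.
Proof.
  intros HP _ [Hdelta [_ [a [b [_ [Hb [Hcells Hcover]]]]]]] _ eps Heps.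
  destruct (code_labels P HP d c n X k a b delta Hcells) as [Y HY].
  set (F := fun t => f (Y t)).
  destruct (finite_upper_bound
    (fun j => fsum (nprod n k) (fun t => Rabs (increments (fun t => F t j) t))) m)
    as [B [HB0 HB]].
  set (Q := fsum n (fun s => INR (nprod s k) * INR (k s))).
  assert (HQ : 0 <= Q) by (apply fsum_nonneg; intros; apply Rmult_le_pos; apply pos_INR).
  destruct (small_multiplier Q (1 / 4) HQ ltac:(lra)) as [eta1 [He1 HQ1]].
  destruct (scale_for_margin delta eta1 Hdelta He1) as [C1 [HC1 HC1d]].
  destruct (small_multiplier B eps HB0 Heps) as [eta2 [He2 HB2]].
  destruct (scale_for_margin (1 / 4) eta2 ltac:(lra) He2) as [C2 [HC2 HC2m]].
  exists (fun s i => C1 * a s i), (fun s l => C1 * b s l), (fun _ _ => 1),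
    (fun s => C2 * INR (nprod s k)),
    (fun t => C2 * (fsum n (fun s => INR (nprod s k)) + INR t - 1 / 2)),
    (fun t j => increments (fun t => F t j) t).
  refine (P_null_sub P HP _ _ _ (almost_surely_labelled P HP d n X k a b delta Y HY Hcover)).
  intros x y [j [Hj Hfar]] [i [Hi [Hx ->]]].
  pose proof (net_on_cell d n X k a b delta C1 eta1 C2 eta2 F B eps i x j
                Hb He1 HC1 HC1d (Rlt_le _ _ HQ1) He2 ltac:(lra) HB2 (HB j Hj) Hi Hx).
  unfold F in *; lra.
Qed.
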